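(* Let $G=(V,E)$ be a locally finite graph without isolated edge, and let $L=\{L_v:v\in V\}\cup\{L_e:e\in E\}$ be a set of lists of weights for $G$. For a subgraph $H$ of $G$, let $L_H$ denote the restriction of $L$ to $V(H)\cup E(H)$. If every finite induced subgraph $H$ of $G$ that is not isomorphic to $K_2$ has an $L_H$-weighting, then $G$ has an $L$-weighting.
   Context: Graphs are simple and may be infinite; locally finite means every vertex has finite degree; an isolated edge is a connected component isomorphic to $K_2$. Each list is a finite subset of $\{1,\dots,k\}$ for some natural number $k$. For a graph $F$ and a set of lists $M=\{M_v:v\in V(F)\}\cup\{M_e:e\in E(F)\}$, a weighting of $F$ from $M$ is a function $\omega\colon V(F)\cup E(F)\to\mathbb{Z}_{>0}$ with $\omega(v)\in M_v$ and $\omega(e)\in M_e$ for all vertices $v$ and edges $e$ of $F$. The weighted degree of a vertex $v$ in $F$ is $s_\omega(v)=\sum_{w\in N_F(v)}\omega(vw)+\omega(v)$. An $M$-weighting of $F$ is a weighting $\omega$ of $F$ from $M$ such that $s_\omega(u)\neq s_\omega(v)$ for every edge $uv$ of $F$. *)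

From mathcomp Require Import all_boot.
From Stdlib Require List.

Set Implicit Arguments.
Unset Strict Implicit.
Unset Printing Implicit Defensive.

Section Graphs.
Variable V : Type.

(* A locally finite simple graph on V is given by duplicate-free finite
   neighbour lists: u ~ v  iff  List.In v (nbr u). *)
Definition adj (nbr : V -> seq V) (u v : V) : Prop := List.In v (nbr u).

Definition simple_locally_finite_graph (nbr : V -> seq V) : Prop :=
  (forall v, List.NoDup (nbr v)) /\
  (forall v, ~ adj nbr v v) /\
  (forall u v, adj nbr u v -> adj nbr v u).

(* An isolated edge: a component isomorphic to K_2, i.e. an edge uv with
   N(u) = {v} and N(v) = {u}. *)
Definition no_isolated_edge (nbr : V -> seq V) : Prop :=
  ~ (exists u v, adj nbr u v /\
       (forall w, adj nbr u w -> w = v) /\ (forall w, adj nbr v w -> w = u)).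

Definition valid_lists (nbr : V -> seq V) (LV : V -> seq nat)
  (LE : V -> V -> seq nat) : Prop :=
  (forall u v, adj nbr u v -> LE u v = LE v u) /\
  (forall v x, x \in LV v -> 0 < x) /\
  (forall u v x, adj nbr u v -> x \in LE u v -> 0 < x).

(* A vertex subset given by a boolean predicate P; F = G[P] is the induced
   subgraph.  (P = predT gives G itself.) *)
Definition finite_vset (P : V -> bool) : Prop :=
  exists l : seq V, forall x, P x -> List.In x l.

Definition induced_is_K2 (nbr : V -> seq V) (P : V -> bool) : Prop :=
  exists u v, adj nbr u v /\ (forall x, P x <-> (x = u \/ x = v)).

Definition weighting_from (nbr : V -> seq V) (LV : V -> seq nat)
  (LE : V -> V -> seq nat) (P : V -> bool) (wv : V -> nat) (we : V -> V -> nat)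
  : Prop :=
  (forall v, P v -> 0 < wv v /\ wv v \in LV v) /\
  (forall u v, P u -> P v -> adj nbr u v ->
     [/\ 0 < we u v, we u v \in LE u v & we u v = we v u]).

Definition wdeg (nbr : V -> seq V) (P : V -> bool) (wv : V -> nat)
  (we : V -> V -> nat) (v : V) : nat :=
  sumn [seq we v w | w <- nbr v & P w] + wv v.

Definition has_L_weighting (nbr : V -> seq V) (LV : V -> seq nat)
  (LE : V -> V -> seq nat) (P : V -> bool) : Prop :=
  exists wv we, weighting_from nbr LV LE P wv we /\
    (forall u v, P u -> P v -> adj nbr u v ->
       wdeg nbr P wv we u <> wdeg nbr P wv we v).

End Graphs.

From mathcomp Require Import all_boot.
From mathcomp Require Import boolp classical_sets filter.

Set Implicit Arguments.
Unset Strict Implicit.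
Unset Printing Implicit Defensive.

(* Compactness through an ultrafilter on vertex sets.  Every finite vertex
   set lies in a finite set P with G[P] not isomorphic to K_2 (if G[P] is
   an edge ab, add a further neighbour of a or b, which exists because ab
   is not an isolated edge).  Hence the sets "finite, not K_2, containing l"
   generate a proper filter; extend it to an ultrafilter U and fix an
   L_{G[P]}-weighting of each such P.  Every weight ranges over a finite
   list, so along U it is eventually constant; this defines limit weights.
   By local finiteness the weighted degree of a vertex involves finitely
   many weights, so along U it eventually equals the limit degree at both
   ends of any given edge, and properness passes to the limit. *)

Local Open Scope classical_set_scope.

Section UltrafilterLimits.
Variables (I : Type) (U : set_system I).

Lemma filter_forall_In {FU : Filter U} (X : Type) (A : X -> set I) (s : seq X) :
  (forall x, List.In x s -> U (A x)) ->
  U [set i | forall x, List.In x s -> A x i].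
Proof.
elim: s => [|a s IHs] UA; first by apply: filterS filterT => i _ x [].
have UAs := IHs (fun x sx => UA x (or_intror sx)).
apply: filterS (filterI (UA a (or_introl erefl)) UAs).
by move=> i [Aa As] x [<-|sx]; [exact: Aa | exact: As].
Qed.

Hypothesis U_ultra : UltraFilter U.

Lemma ultra_mem_seq_const (T : eqType) (f : I -> T) (s : seq T) :
  U [set i | f i \in s] -> exists y, U [set i | f i = y].
Proof.
elim: s => [|a s IHs] Us.
  by have [i] := filter_ex Us; rewrite /= in_nil.
have [Ua|UnA] := in_ultra_setVsetC [set i | f i = a] U_ultra; first by exists a.
apply: IHs; apply: filterS (filterI Us UnA) => i [/=].
by rewrite inE => /orP[/eqP|].
Qed.

Lemma ultra_pointwise_limit (X : Type) (T : eqType) (D : X -> Prop)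
    (L : X -> seq T) (f : I -> X -> T) :
  (forall x, D x -> U [set i | f i x \in L x]) ->
  exists g : X -> T, forall x, D x -> U [set i | f i x = g x].
Proof.
move=> UL; have [i0 _] := filter_ex (@filterT _ U _).
suff /choice[g Ug] : forall x, exists y, D x -> U [set i | f i x = y] by exists g.
move=> x; have [Dx|nDx] := pselect (D x); last by exists (f i0 x).
by have [y Uy] := ultra_mem_seq_const (UL x Dx); exists y.
Qed.

End UltrafilterLimits.

Section Compactness.
Variables (V : Type) (nbr : V -> seq V).

Definition in_list (l : seq V) : V -> bool := fun x => `[< List.In x l >].

Lemma finite_vset_in_list (l : seq V) : finite_vset (in_list l).
Proof. by exists l => x /asboolP. Qed.

Lemma wdeg_eq_local (P : V -> bool) wv we wv' we' (x : V) :
  (forall w, List.In w (nbr x) -> P w) ->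
  wv x = wv' x -> (forall w, List.In w (nbr x) -> we x w = we' x w) ->
  wdeg nbr P wv we x = wdeg nbr (fun _ => true) wv' we' x.
Proof.
move=> Pnbr wvx wex.
have filter_nbr : [seq w <- nbr x | P w] = nbr x.
  by rewrite -[RHS]filter_predT; exact (List.filter_ext_in P predT _ Pnbr).
rewrite /wdeg filter_nbr filter_predT wvx; congr (sumn _ + _).
exact: List.map_ext_in.
Qed.

Definition finite_nonK2 (P : V -> bool) : Prop :=
  finite_vset P /\ ~ induced_is_K2 nbr P.

Definition nonK2_supersets (l : seq V) : set (V -> bool) :=
  [set P | finite_nonK2 P /\ forall x, List.In x l -> P x].

Hypothesis graphG : simple_locally_finite_graph nbr.
Hypothesis no_isolatedG : no_isolated_edge nbr.

Lemma exists_nonK2_superset (l : seq V) : nonK2_supersets l !=set0.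
Proof.
have [[a [b [ab Kab]]]|nK2] := pselect (induced_is_K2 nbr (in_list l)); last first.
  exists (in_list l); split; first by split; [exact: finite_vset_in_list|].
  by move=> x lx; apply/asboolP.
have [w abw] : exists w, (adj nbr a w /\ w <> b) \/ (adj nbr b w /\ w <> a).
  apply: contrapT => nw; apply: no_isolatedG; exists a, b; split=> //.
  by split=> w ? ; apply: contrapT => ?; apply: nw; exists w; [left|right].
exists (in_list (w :: l)); split; last by move=> x lx; apply/asboolP; right.
split; first exact: finite_vset_in_list.
have [_ [irr _]] := graphG.
have in_wl x : List.In x (w :: l) -> in_list (w :: l) x by move/asboolP.
have la : List.In a l by apply/asboolP/Kab; left.
have lb : List.In b l by apply/asboolP/Kab; right.
have neq_ab : a <> b by move=> eab; rewrite eab in ab; exact: irr ab.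
have [neq_wa neq_wb] : w <> a /\ w <> b.
  by case: abw => [[aw ?]|[bw ?]]; split=> // ew; [move: aw | move: bw];
    rewrite ew; exact: irr.
move=> [c [d [_ Kcd]]].
have /Kcd Ka := in_wl a (or_intror la).
have /Kcd Kb := in_wl b (or_intror lb).
have /Kcd Kw := in_wl w (or_introl erefl).
by case: Ka Kb Kw => [?|?] [?|?] [?|?]; congruence.
Qed.

Lemma nonK2_supersets_proper : ProperFilter (filter_from setT nonK2_supersets).
Proof.
apply: filter_from_proper => [|l _]; last exact: exists_nonK2_superset.
apply: filter_fromT_filter; first by exists [::].
move=> l1 l2; exists (l1 ++ l2) => P [nK2 Pl]; split; split=> // x lx; apply: Pl;
  apply: List.in_or_app; by [left|right].
Qed.

Section Limit.
Variables (LV : V -> seq nat) (LE : V -> V -> seq nat).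
Variable U : set_system (V -> bool).
Hypothesis U_proper : ProperFilter U.
Hypothesis U_supersets : forall l, U (nonK2_supersets l).
Variables (wvP : (V -> bool) -> V -> nat) (weP : (V -> bool) -> V -> V -> nat).
Hypothesis wP_weighting :
  forall P, finite_nonK2 P -> weighting_from nbr LV LE P (wvP P) (weP P).
Hypothesis wP_proper : forall P, finite_nonK2 P -> forall u v, P u -> P v ->
  adj nbr u v -> wdeg nbr P (wvP P) (weP P) u <> wdeg nbr P (wvP P) (weP P) v.

Lemma vertex_weights_limit (U_ultra : UltraFilter U) :
  exists wv : V -> nat, forall v, U [set P | wvP P v = wv v].
Proof.
have Uv (v : V) : True -> U [set P | wvP P v \in LV v].
  move=> _; apply: filterS (U_supersets [:: v]) => P [nK2 Pv].
  exact: ((wP_weighting nK2).1 v (Pv v (or_introl erefl))).2.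
have [wv Uwv] := ultra_pointwise_limit U_ultra Uv.
by exists wv => v; exact: Uwv.
Qed.

Lemma edge_weights_limit (U_ultra : UltraFilter U) : exists we : V -> V -> nat,
  forall u v, adj nbr u v -> U [set P | weP P u v = we u v].
Proof.
have Ue (e : V * V) : adj nbr e.1 e.2 -> U [set P | weP P e.1 e.2 \in LE e.1 e.2].
  case: e => u v uv; apply: filterS (U_supersets [:: u; v]) => P [nK2 Puv].
  by case: ((wP_weighting nK2).2 u v
    (Puv u (or_introl erefl)) (Puv v (or_intror (or_introl erefl))) uv).
have [we Uwe] := ultra_pointwise_limit U_ultra Ue.
by exists (fun u v => we (u, v)) => u v uv; exact: (Uwe (u, v)).
Qed.

Variables (wv : V -> nat) (we : V -> V -> nat).
Hypothesis wv_limit : forall v, U [set P | wvP P v = wv v].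
Hypothesis we_limit : forall u v, adj nbr u v -> U [set P | weP P u v = we u v].

Lemma limit_weighting_from : weighting_from nbr LV LE (fun _ => true) wv we.
Proof.
have [_ [_ sym]] := graphG; split=> [v _|u v _ _ uv].
  have [P [[nK2 Pv] <-]] := filter_ex (filterI (U_supersets [:: v]) (wv_limit v)).
  exact: (wP_weighting nK2).1 v (Pv v (or_introl erefl)).
have [P [[nK2 Puv] [<- <-]]] := filter_ex (filterI (U_supersets [:: u; v])
  (filterI (we_limit uv) (we_limit (sym _ _ uv)))).
exact: (wP_weighting nK2).2 u v (Puv u (or_introl erefl))
  (Puv v (or_intror (or_introl erefl))) uv.
Qed.

Lemma eventually_wdeg_limit (x : V) :
  U [set P | wdeg nbr P (wvP P) (weP P) x = wdeg nbr (fun _ => true) wv we x].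
Proof.
have Unbr : U [set P | forall w, List.In w (nbr x) -> weP P x w = we x w].
  exact: filter_forall_In (fun w => [set P | weP P x w = we x w]) _ (@we_limit x).
apply: filterS (filterI (U_supersets (nbr x)) (filterI (wv_limit x) Unbr)).
by move=> P [[_ Pnbr] [wvx wex]]; exact: wdeg_eq_local.
Qed.

Lemma limit_wdeg_proper (u v : V) : adj nbr u v ->
  wdeg nbr (fun _ => true) wv we u <> wdeg nbr (fun _ => true) wv we v.
Proof.
move=> uv; have [P [[nK2 Puv] [<- <-]]] := filter_ex (filterI (U_supersets [:: u; v])
  (filterI (eventually_wdeg_limit u) (eventually_wdeg_limit v))).
exact: wP_proper nK2 u v (Puv u (or_introl erefl))
  (Puv v (or_intror (or_introl erefl))) uv.
Qed.

End Limit.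
End Compactness.

Theorem lemma6 (V : Type) (nbr : V -> seq V) (LV : V -> seq nat)
  (LE : V -> V -> seq nat) :
  simple_locally_finite_graph nbr ->
  no_isolated_edge nbr ->
  valid_lists nbr LV LE ->
  (forall P : V -> bool, finite_vset P -> ~ induced_is_K2 nbr P ->
     has_L_weighting nbr LV LE P) ->
  has_L_weighting nbr LV LE (fun _ => true).
Proof.
move=> graphG no_isolatedG _ finite_weightings.
have [U [U_ultra U_supersets]] :=
  ultraFilterLemma (nonK2_supersets_proper graphG no_isolatedG).
have U_proper : ProperFilter U := @ultra_proper _ _ U_ultra.
have U_sup l : U (nonK2_supersets nbr l) by apply: U_supersets; exists l.
have /choice[wvP /choice[weP wP]] : forall P, exists wv we, finite_nonK2 nbr P ->
    weighting_from nbr LV LE P wv we /\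
    forall u v, P u -> P v -> adj nbr u v -> wdeg nbr P wv we u <> wdeg nbr P wv we v.
  move=> P; have [[finP nK2]|nP] := pselect (finite_nonK2 nbr P); last first.
    by exists (fun _ => 0), (fun _ _ => 0) => /nP.
  by have [wv [we wP]] := finite_weightings P finP nK2; exists wv, we.
have wP_weighting P nK2 := (wP P nK2).1.
have wP_proper P nK2 := (wP P nK2).2.
have [wv wv_limit] := vertex_weights_limit U_proper U_sup wP_weighting U_ultra.
have [we we_limit] := edge_weights_limit U_proper U_sup wP_weighting U_ultra.
have limit_weighting :=
  limit_weighting_from graphG U_proper U_sup wP_weighting wv_limit we_limit.
have limit_proper :=
  limit_wdeg_proper U_proper U_sup wP_proper wv_limit we_limit.
by exists wv, we; split=> // u v _ _; exact: limit_proper.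
Qed.
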